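(* Let $\mathrm G^S=(\mathrm V,\mathrm E^S)$ be a fixed bidirectional connected graph with constant weights $a_{ij}^S=a_{ji}^S>0$, and suppose $\mathrm{rank}(\mathbf H)=m$. For $K>0$ let $\mathcal Z_K=\{\mathbf x\in(\mathbb R^m)^N:\nabla\mathcal D_K(\mathbf x)=0\}$. Then (i) $\mathcal Z_K$ is a singleton for every $K>0$ (so every trajectory of the ''consensus + projection'' flow on $\mathrm G^S$ converges to a single point); and (ii) for every $\kappa_0>0$ the set $\bigcup_{K>\kappa_0}\mathcal Z_K$ is bounded.
   Context: $\mathbf H\in\mathbb R^{N\times m}$ has rows $\mathbf h_1^T,\dots,\mathbf h_N^T$ with $\|\mathbf h_i\|=1$, $\mathbf z=(z_1,\dots,z_N)^T$; $\mathcal A_i=\{\mathbf y\in\mathbb R^m:\mathbf h_i^T\mathbf y=z_i\}$, $\|\mathbf v\|_{\mathcal A_i}$ the Euclidean distance from $\mathbf v$ to $\mathcal A_i$. $\mathrm V=\{1,\dots,N\}$; bidirectional means $(i,j)\in\mathrm E^S\iff(j,i)\in\mathrm E^S$; $\mathrm N_i=\{j:(j,i)\in\mathrm E^S\}$. $\mathcal D_K(\mathbf x)=\frac12\sum_{i=1}^N\|\mathbf x_i\|_{\mathcal A_i}^2+\frac K2\sum_{\{i,j\}\in\mathrm E^S}a_{ij}^S\|\mathbf x_j-\mathbf x_i\|^2$, the second sum over unordered edges; the ''consensus + projection'' flow $\dot{\mathbf x}_i=K\sum_{j\in\mathrm N_i}a_{ij}^S(\mathbf x_j-\mathbf x_i)+\mathcal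 P_{\mathcal A_i}(\mathbf x_i)-\mathbf x_i$ equals $\dot{\mathbf x}=-\nabla\mathcal D_K(\mathbf x)$, where $\mathcal P_{\mathcal A_i}(\mathbf y)=(I-\mathbf h_i\mathbf h_i^T)\mathbf y+z_i\mathbf h_i$. *)

From Stdlib Require Import Reals Lra Lia ClassicalEpsilon.
Open Scope R_scope.

Fixpoint sumR (n : nat) (f : nat -> R) : R :=
  match n with O => 0 | S p => sumR p f + f p end.

(* Vectors of R^m are represented as functions nat -> R (entries k < m used). *)
Definition dotp (m : nat) (u v : nat -> R) : R := sumR m (fun k => u k * v k).
Definition vnorm (m : nat) (u : nat -> R) : R := sqrt (dotp m u u).

Definition hyperplane (m : nat) (hi : nat -> R) (zi : R) (y : nat -> R) : Prop :=
  dotp m hi y = zi.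

Definition is_glb (S : R -> Prop) (d : R) : Prop :=
  (forall r, S r -> d <= r) /\ (forall b, (forall r, S r -> b <= r) -> b <= d).

Definition dist_hyp (m : nat) (hi : nat -> R) (zi : R) (v : nat -> R) : R :=
  epsilon (inhabits 0)
    (is_glb (fun r => exists y, hyperplane m hi zi y /\
                          r = vnorm m (fun k => v k - y k))).

(* Full column rank: rank(H) = m for the N x m matrix with rows h_i,
   i.e. the m columns are linearly independent (H y = 0 -> y = 0). *)
Definition rank_full_col (N m : nat) (h : nat -> nat -> R) : Prop :=
  forall y : nat -> R,
    (forall i, (i < N)%nat -> dotp m (h i) y = 0) ->
    forall k, (k < m)%nat -> y k = 0.

(* Graph on V = {0..N-1} given by weights a: (i,j) is an edge iff a i j > 0. *)
Inductive reach (N : nat) (a : nat -> nat -> R) : nat -> nat -> Prop :=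
| reach_refl : forall i, reach N a i i
| reach_step : forall i j k, (j < N)%nat -> a i j > 0 -> reach N a j k ->
    reach N a i k.

Definition connected (N : nat) (a : nat -> nat -> R) : Prop :=
  forall i j, (i < N)%nat -> (j < N)%nat -> reach N a i j.

(* Configuration x : (R^m)^N, x i k = k-th coordinate of x_i. *)
Definition DK (N m : nat) (h : nat -> nat -> R) (z : nat -> R)
  (a : nat -> nat -> R) (K : R) (x : nat -> nat -> R) : R :=
  / 2 * sumR N (fun i => (dist_hyp m (h i) (z i) (x i)) ^ 2)
  + K / 2 * sumR N (fun i => sumR N (fun j =>
       if (i <? j)%nat
       then a i j * (vnorm m (fun k => x j k - x i k)) ^ 2 else 0)).

(* grad D_K(x) = 0 : every directional derivative of D_K at x vanishes. *)
Definition grad_zero (N m : nat) (h : nat -> nat -> R) (z : nat -> R)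
  (a : nat -> nat -> R) (K : R) (x : nat -> nat -> R) : Prop :=
  forall v : nat -> nat -> R,
    derivable_pt_lim
      (fun t => DK N m h z a K (fun i k => x i k + t * v i k)) 0 0.

(* D_K is a quadratic function, D_K(x + t v) = D_K(x) + t L_x(v) + t^2 Q(v), whose
   quadratic part Q(v) = 1/2 sum_i (h_i^T v_i)^2 + K/4 sum_{i,j} a_ij ||v_j - v_i||^2 is
   positive definite: Q(v) = 0 forces v to be constant along edges, hence constant by
   connectivity, and then H v_0 = 0 forces v = 0 by the rank condition.  So the gradient is
   an injective, hence invertible, affine map and has exactly one zero.  For the bound, a
   critical point minimises D_K, so D_K(x) <= D_K(0) = 1/2 ||z||^2: this bounds every
   residual h_i^T x_i - z_i and, uniformly in K > kappa0, every edge difference x_j - x_i;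
   summing along paths bounds x_i - x_0, and then H x_0 is bounded, hence so is x_0. *)
From Stdlib Require Import Reals Lra Lia ClassicalEpsilon FunctionalExtensionality.
From mathcomp Require all_boot all_algebra Rstruct.
Open Scope R_scope.

(** * Finite sums *)

Lemma sumR_ext n f g : (forall i, (i < n)%nat -> f i = g i) -> sumR n f = sumR n g.
Proof.
induction n as [|n IH]; simpl; intros H; auto.
rewrite IH by (intros; apply H; lia). rewrite H by lia. reflexivity.
Qed.

Lemma sumR_add n f g : sumR n (fun i => f i + g i) = sumR n f + sumR n g.
Proof. induction n; simpl; [ring | rewrite IHn; ring]. Qed.

Lemma sumR_sub n f g : sumR n (fun i => f i - g i) = sumR n f - sumR n g.
Proof. induction n; simpl; [ring | rewrite IHn; ring]. Qed.

Lemma sumR_scal n c f : sumR n (fun i => c * f i) = c * sumR n f.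
Proof. induction n; simpl; [ring | rewrite IHn; ring]. Qed.

Lemma sumR_scal_r n f c : sumR n (fun i => f i * c) = sumR n f * c.
Proof. induction n; simpl; [ring | rewrite IHn; ring]. Qed.

Lemma sumR_const0 n : sumR n (fun _ => 0) = 0.
Proof. induction n; simpl; [ring | rewrite IHn; ring]. Qed.

Lemma sumR_eq0 n f : (forall i, (i < n)%nat -> f i = 0) -> sumR n f = 0.
Proof. intros H. rewrite (sumR_ext n f (fun _ => 0)) by auto. apply sumR_const0. Qed.

Lemma sumR_le n f g : (forall i, (i < n)%nat -> f i <= g i) -> sumR n f <= sumR n g.
Proof.
induction n; simpl; intros H; [lra|].
pose proof (H n ltac:(lia)). pose proof (IHn ltac:(intros; apply H; lia)). lra.
Qed.

Lemma sumR_ge0 n f : (forall i, (i < n)%nat -> 0 <= f i) -> 0 <= sumR n f.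
Proof. intros H. rewrite <- (sumR_const0 n). apply sumR_le. exact H. Qed.

Lemma sumR_term_le n f i :
  (forall j, (j < n)%nat -> 0 <= f j) -> (i < n)%nat -> f i <= sumR n f.
Proof.
induction n; simpl; intros H Hi; [lia|].
destruct (Nat.eq_dec i n) as [->|Hne].
- pose proof (sumR_ge0 n f ltac:(intros; apply H; lia)). lra.
- pose proof (IHn ltac:(intros; apply H; lia) ltac:(lia)). pose proof (H n ltac:(lia)). lra.
Qed.

Lemma sumR_eq0_ge0 n f : (forall i, (i < n)%nat -> 0 <= f i) -> sumR n f = 0 ->
  forall i, (i < n)%nat -> f i = 0.
Proof. intros H0 Hs i Hi. pose proof (sumR_term_le n f i H0 Hi). pose proof (H0 i Hi). lra. Qed.

Lemma sumR_swap n p f :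
  sumR n (fun i => sumR p (fun j => f i j)) = sumR p (fun j => sumR n (fun i => f i j)).
Proof.
induction n; simpl.
- symmetry. apply sumR_const0.
- rewrite IHn, <- sumR_add. reflexivity.
Qed.

Lemma sumR_abs n f : Rabs (sumR n f) <= sumR n (fun i => Rabs (f i)).
Proof.
induction n; simpl; [rewrite Rabs_R0; lra|].
eapply Rle_trans; [apply Rabs_triang | lra].
Qed.

Lemma sumR_delta n k f : (k < n)%nat ->
  sumR n (fun l => if Nat.eqb l k then f l else 0) = f k.
Proof.
induction n; simpl; intros Hk; [lia|].
destruct (Nat.eq_dec k n) as [->|Hne].
- rewrite Nat.eqb_refl, sumR_eq0; [ring|].
  intros i Hi. destruct (Nat.eqb_spec i n); [lia | reflexivity].
- destruct (Nat.eqb_spec n k); [lia|]. rewrite IHn by lia. ring.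
Qed.

Lemma sumR_split_add n p f : sumR (n + p) f = sumR n f + sumR p (fun l => f (n + l)%nat).
Proof.
induction p; simpl; [rewrite Nat.add_0_r; ring|].
rewrite Nat.add_succ_r. simpl. rewrite IHp. ring.
Qed.

Lemma sumR_split_mul n p f :
  sumR (n * p) f = sumR n (fun j => sumR p (fun l => f (j * p + l)%nat)).
Proof. induction n; simpl; [reflexivity|]. rewrite Nat.add_comm, sumR_split_add, IHn. reflexivity. Qed.

Lemma sumR_quadratic n t f p q r :
  (forall i, (i < n)%nat -> f i = p i + t * q i + t ^ 2 * r i) ->
  sumR n f = sumR n p + t * sumR n q + t ^ 2 * sumR n r.
Proof. intros H. rewrite (sumR_ext n f _ H), !sumR_add, !sumR_scal. ring. Qed.

Lemma sumR_upper_half n (s : nat -> nat -> R) :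
  (forall i j, s i j = s j i) -> (forall i, s i i = 0) ->
  sumR n (fun i => sumR n (fun j => if (i <? j)%nat then s i j else 0)) =
  / 2 * sumR n (fun i => sumR n (fun j => s i j)).
Proof.
intros Hs H0.
assert (E : sumR n (fun i => sumR n (fun j => s i j)) =
  sumR n (fun i => sumR n (fun j => if (i <? j)%nat then s i j else 0)) +
  sumR n (fun i => sumR n (fun j => if (j <? i)%nat then s j i else 0))).
{ rewrite <- sumR_add. apply sumR_ext. intros i _. rewrite <- sumR_add.
  apply sumR_ext. intros j _.
  destruct (Nat.ltb_spec i j), (Nat.ltb_spec j i); try lia.
  - ring.
  - rewrite Hs. ring.
  - replace j with i by lia. rewrite H0. ring. }
rewrite E, (sumR_swap n n (fun i j => if (j <? i)%nat then s j i else 0)). field.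
Qed.

Lemma common_bound n (Q : nat -> R -> Prop) :
  (forall i L L', Q i L -> L <= L' -> Q i L') ->
  (forall i, (i < n)%nat -> exists L, Q i L) -> exists L, forall i, (i < n)%nat -> Q i L.
Proof.
intros Hmono. induction n; intros H.
- exists 0. intros; lia.
- destruct IHn as [L1 H1]; [intros; apply H; lia|].
  destruct (H n ltac:(lia)) as [L2 H2].
  exists (Rmax L1 L2). intros i Hi. destruct (Nat.eq_dec i n) as [->|Hne].
  + eapply Hmono; [eauto | apply Rmax_r].
  + eapply Hmono; [apply H1; lia | apply Rmax_l].
Qed.

(** * Euclidean geometry of R^m *)

Lemma dotp_ge0 m u : 0 <= dotp m u u.
Proof. apply sumR_ge0. intros. apply Rle_0_sqr. Qed.

Lemma vnorm_sq m u : vnorm m u ^ 2 = dotp m u u.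
Proof. apply pow2_sqrt, dotp_ge0. Qed.

Lemma dotp_linear_r m u p q t :
  dotp m u (fun k => p k + t * q k) = dotp m u p + t * dotp m u q.
Proof. unfold dotp. rewrite <- sumR_scal, <- sumR_add. apply sumR_ext. intros; ring. Qed.

Lemma dotp_sub_r m u p q : dotp m u (fun k => p k - q k) = dotp m u p - dotp m u q.
Proof. unfold dotp. rewrite <- sumR_sub. apply sumR_ext. intros; ring. Qed.

Lemma Rabs_dotp_le m u w c : (forall k, (k < m)%nat -> Rabs (w k) <= c) ->
  Rabs (dotp m u w) <= c * sumR m (fun k => Rabs (u k)).
Proof.
intros Hw. eapply Rle_trans; [apply sumR_abs|]. rewrite <- sumR_scal. apply sumR_le.
intros k Hk. rewrite Rabs_mult, Rmult_comm. apply Rmult_le_compat_r; auto. apply Rabs_pos.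
Qed.

Lemma Rabs_le_sqrt u c : u ^ 2 <= c -> Rabs u <= sqrt c.
Proof. intros H. rewrite <- sqrt_Rsqr_abs. apply sqrt_le_1_alt. unfold Rsqr. nra. Qed.

Lemma dotp_unit_sq_le m u w : dotp m u u = 1 -> (dotp m u w) ^ 2 <= dotp m w w.
Proof.
intros Hu. set (t := dotp m u w).
pose proof (dotp_ge0 m (fun k => w k - t * u k)) as H. unfold dotp in H.
rewrite (sumR_quadratic m t _ (fun k => w k * w k) (fun k => -2 * (u k * w k)) (fun k => u k * u k))
  in H by (intros; ring).
rewrite sumR_scal in H. fold (dotp m w w) (dotp m u w) (dotp m u u) t in H.
rewrite Hu in H. nra.
Qed.

Lemma is_glb_unique S d1 d2 : is_glb S d1 -> is_glb S d2 -> d1 = d2.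
Proof. intros [H1 H1'] [H2 H2']. apply Rle_antisym; [apply H2' | apply H1']; auto. Qed.

(* The nearest point of the hyperplane is v - (h^T v - z) h. *)
Lemma dist_hyp_unit m hi zi v : vnorm m hi = 1 ->
  dist_hyp m hi zi v = Rabs (dotp m hi v - zi).
Proof.
intros Hn.
assert (Hhh : dotp m hi hi = 1) by (rewrite <- vnorm_sq, Hn; ring).
set (c := dotp m hi v - zi).
assert (Hglb : is_glb (fun r => exists y, hyperplane m hi zi y /\
                        r = vnorm m (fun k => v k - y k)) (Rabs c)).
{ split.
  - intros r [y [Hy ->]]. unfold hyperplane in Hy.
    assert (Hc : c = dotp m hi (fun k => v k - y k)) by (rewrite dotp_sub_r, Hy; reflexivity).
    rewrite Hc. apply Rabs_le_sqrt, dotp_unit_sq_le, Hhh.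
  - intros b Hb. apply Hb. exists (fun k => v k + (- c) * hi k). split.
    + unfold hyperplane. rewrite dotp_linear_r, Hhh. unfold c. ring.
    + unfold vnorm, dotp.
      rewrite (sumR_ext m _ (fun k => c ^ 2 * (hi k * hi k))) by (intros; ring).
      rewrite sumR_scal. fold (dotp m hi hi). rewrite Hhh, Rmult_1_r, <- sqrt_Rsqr_abs.
      unfold Rsqr. f_equal. ring. }
apply (is_glb_unique _ _ _ (epsilon_spec _ _ (ex_intro _ _ Hglb)) Hglb).
Qed.

Lemma derivable_pt_lim_quadratic A B C :
  derivable_pt_lim (fun t => A + t * B + t ^ 2 * C) 0 B.
Proof.
intros eps Heps.
assert (Hd : 0 < eps / (Rabs C + 1)).
{ apply Rdiv_lt_0_compat; auto. pose proof (Rabs_pos C); lra. }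
exists (mkposreal _ Hd). intros t Ht Hlt. simpl in Hlt.
replace ((A + (0 + t) * B + (0 + t) ^ 2 * C - (A + 0 * B + 0 ^ 2 * C)) / t - B)
  with (t * C) by (field; auto).
rewrite Rabs_mult. pose proof (Rabs_pos C). pose proof (Rabs_pos t).
apply Rle_lt_trans with (Rabs t * (Rabs C + 1)); [nra|].
apply Rlt_le_trans with (eps / (Rabs C + 1) * (Rabs C + 1)).
- apply Rmult_lt_compat_r; lra.
- right; field; lra.
Qed.

(** * Linear algebra *)

Module SquareSystem.
Import all_boot all_algebra Rstruct GRing.Theory.

Lemma sumR_big n (f : nat -> R) : sumR n f = (\sum_(q < n) f q)%R.
Proof. elim: n => [|n IH] /=; [by rewrite big_ord0 | by rewrite big_ord_recr /= IH]. Qed.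

Definition ext0 {n} (u : 'I_n -> R) (q : nat) : R :=
  match Sumbool.sumbool_of_bool (q < n)%N with left H => u (Ordinal H) | right _ => 0 end.

Lemma ext0_ord n u (q : 'I_n) : ext0 u q = u q.
Proof.
rewrite /ext0; case: Sumbool.sumbool_of_bool => H; last by rewrite ltn_ord in H.
by congr u; apply: val_inj.
Qed.

Lemma sumR_matrix_row n (M : nat -> nat -> R) (u : 'rV[R]_n) (p : 'I_n) :
  sumR n (fun q => M p q * ext0 (u ord0) q) = (u *m \matrix_(q < n, p < n) M p q)%R ord0 p.
Proof.
rewrite mxE sumR_big; apply: eq_bigr => q _.
by rewrite ext0_ord mxE mulrC.
Qed.

Lemma injective_surjective n (M : nat -> nat -> R) :
  (forall y : nat -> R, (forall p, lt p n -> sumR n (fun q => M p q * y q) = 0) ->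
      forall q, lt q n -> y q = 0) ->
  forall b : nat -> R, exists y : nat -> R, forall p, lt p n ->
      sumR n (fun q => M p q * y q) = b p.
Proof.
move=> Hinj b; set B : 'M[R]_n := (\matrix_(q < n, p < n) M p q)%R.
have HB : B \in unitmx.
  rewrite -row_free_unit -kermx_eq0; apply/eqP/row_matrixP => i; rewrite row0.
  set u := row i (kermx B).
  have Hu : (u *m B = 0)%R by rewrite -row_mul mulmx_ker row0.
  apply/rowP => q; rewrite [RHS]mxE -ext0_ord; apply: Hinj; last by apply/ltP.
  move=> p /ltP Hp; by rewrite (sumR_matrix_row _ M u (Ordinal Hp)) Hu mxE.
exists (ext0 (((\row_(p < n) b p) *m invmx B)%R ord0)) => p /ltP Hp.
by rewrite (sumR_matrix_row _ M _ (Ordinal Hp)) mulmxKV // mxE.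
Qed.

End SquareSystem.

Lemma divmod_pair m j l : (l < m)%nat -> ((j * m + l) / m = j /\ (j * m + l) mod m = l)%nat.
Proof.
intros Hl. split.
- symmetry. apply (Nat.div_unique _ _ _ l); lia.
- symmetry. apply (Nat.mod_unique _ _ j l); lia.
Qed.

(* Flattening the index pair (i, k) to i * m + k reduces this to the square case. *)
Lemma injective_surjective2 N m (M : nat -> nat -> nat -> nat -> R) :
  (forall w, (forall i k, (i < N)%nat -> (k < m)%nat ->
       sumR N (fun j => sumR m (fun l => M i k j l * w j l)) = 0) ->
     forall i k, (i < N)%nat -> (k < m)%nat -> w i k = 0) ->
  forall b, exists x, forall i k, (i < N)%nat -> (k < m)%nat ->
     sumR N (fun j => sumR m (fun l => M i k j l * x j l)) = b i k.
Proof.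
intros Hinj b.
set (Mf := fun p q => M (p / m)%nat (p mod m)%nat (q / m)%nat (q mod m)%nat).
assert (Hflat : forall y p, sumR (N * m) (fun q => Mf p q * y q) =
   sumR N (fun j => sumR m (fun l => M (p / m)%nat (p mod m)%nat j l * y (j * m + l)%nat))).
{ intros y p. rewrite sumR_split_mul. apply sumR_ext. intros j _. apply sumR_ext. intros l Hl.
  unfold Mf. destruct (divmod_pair m j l Hl) as [-> ->]. reflexivity. }
assert (Hpair : forall i k, (i < N)%nat -> (k < m)%nat ->
  ((i * m + k) < N * m /\ (i * m + k) / m = i /\ (i * m + k) mod m = k)%nat).
{ intros i k Hi Hk. destruct (divmod_pair m i k Hk). split; auto. nia. }
destruct (SquareSystem.injective_surjective (N * m) Mf)
  with (b := fun p => b (p / m)%nat (p mod m)%nat) as [y Hy].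
- intros y Hy q Hq.
  assert (Hm : m <> 0%nat) by (intro; subst; lia).
  assert (Hqm : (q / m < N)%nat) by (apply Nat.Div0.div_lt_upper_bound; lia).
  pose proof (Nat.mod_upper_bound q m Hm).
  rewrite (Nat.div_mod q m Hm), Nat.mul_comm.
  apply (Hinj (fun j l => y (j * m + l)%nat)); auto.
  intros i k Hi Hk. destruct (Hpair i k Hi Hk) as [H1 [H2 H3]].
  rewrite <- (Hy (i * m + k)%nat), Hflat, H2, H3 by lia. reflexivity.
- exists (fun j l => y (j * m + l)%nat). intros i k Hi Hk.
  destruct (Hpair i k Hi Hk) as [H1 [H2 H3]].
  pose proof (Hy (i * m + k)%nat H1) as E. rewrite Hflat, H2, H3 in E. exact E.
Qed.

Lemma gram_apply N m (h : nat -> nat -> R) y l :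
  sumR m (fun l' => sumR N (fun i => h i l * h i l') * y l') =
  sumR N (fun i => dotp m (h i) y * h i l).
Proof.
rewrite (sumR_ext m _ (fun l' => sumR N (fun i => h i l * (h i l' * y l')))).
- rewrite sumR_swap. apply sumR_ext. intros i _. unfold dotp. rewrite sumR_scal. ring.
- intros. rewrite <- sumR_scal_r. apply sumR_ext. intros; ring.
Qed.

Lemma dotp_sumR m N (h : nat -> nat -> R) c y :
  dotp m y (fun l => sumR N (fun i => c i * h i l)) = sumR N (fun i => c i * dotp m (h i) y).
Proof.
unfold dotp. rewrite (sumR_ext m _ (fun l => sumR N (fun i => c i * (h i l * y l)))).
- rewrite sumR_swap. apply sumR_ext. intros i _. apply sumR_scal.
- intros. rewrite <- sumR_scal. apply sumR_ext. intros; ring.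
Qed.

(* With G = H^T H invertible, y_k = e_k^T G^-1 H^T (H y) is a fixed combination of the h_i^T y. *)
Lemma rank_full_col_bound N m h : rank_full_col N m h -> forall C, 0 <= C ->
  exists c, forall y, (forall i, (i < N)%nat -> Rabs (dotp m (h i) y) <= C) ->
    forall k, (k < m)%nat -> Rabs (y k) <= c.
Proof.
intros Hr C HC.
assert (Hsolve : forall b, exists u, forall l, (l < m)%nat ->
          sumR m (fun l' => sumR N (fun i => h i l * h i l') * u l') = b l).
{ apply SquareSystem.injective_surjective. intros y Hy.
  assert (E : sumR N (fun i => dotp m (h i) y * dotp m (h i) y) = 0).
  { rewrite <- dotp_sumR. apply sumR_eq0. intros l Hl.
    rewrite <- gram_apply, Hy by lia. ring. }
  apply Hr. intros i Hi.
  apply Rsqr_0_uniq, (sumR_eq0_ge0 N _ ltac:(intros; apply Rle_0_sqr) E i Hi). }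
enough (Hc : exists c, forall k, (k < m)%nat -> forall y,
            (forall i, (i < N)%nat -> Rabs (dotp m (h i) y) <= C) -> Rabs (y k) <= c).
{ destruct Hc as [c Hc]. exists c. intros y Hy k Hk. apply Hc; auto. }
apply common_bound.
- intros k L L' H HL y Hy. eapply Rle_trans; [apply H; auto | exact HL].
- intros k Hk. destruct (Hsolve (fun l => if Nat.eqb l k then 1 else 0)) as [u Hu].
  exists (sumR N (fun i => Rabs (dotp m (h i) u) * C)). intros y Hy.
  assert (E : y k = sumR N (fun i => dotp m (h i) u * dotp m (h i) y)).
  { rewrite <- dotp_sumR, <- (sumR_delta m k y Hk). apply sumR_ext. intros l Hl.
    rewrite <- gram_apply, Hu by auto. destruct (Nat.eqb l k); ring. }
  rewrite E. eapply Rle_trans; [apply sumR_abs|]. apply sumR_le. intros i Hi.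
  rewrite Rabs_mult. apply Rmult_le_compat_l; [apply Rabs_pos | auto].
Qed.

(** * The energy D_K as an explicit quadratic *)

Lemma reach_eq N (a : nat -> nat -> R) (f : nat -> R) :
  (forall i j, (i < N)%nat -> (j < N)%nat -> a i j > 0 -> f i = f j) ->
  forall i j, reach N a i j -> (i < N)%nat -> f i = f j.
Proof.
intros Hedge i j Hr. induction Hr as [i|i j l Hj Ha Hr IH]; intros Hi; auto.
rewrite <- (IH Hj). apply Hedge; auto.
Qed.

Lemma reach_bound N (a : nat -> nat -> R) (P : (nat -> R) -> Prop) (E : nat -> nat -> R) :
  (forall f, P f -> forall i j, (i < N)%nat -> (j < N)%nat -> a i j > 0 ->
     Rabs (f i - f j) <= E i j) ->
  forall i j, reach N a i j -> (i < N)%nat ->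
  exists L, forall f, P f -> Rabs (f i - f j) <= L.
Proof.
intros HE i j Hr. induction Hr as [i|i j l Hj Ha Hr IH]; intros Hi.
- exists 0. intros f _. replace (f i - f i) with 0 by ring. rewrite Rabs_R0. lra.
- destruct (IH Hj) as [L HL]. exists (E i j + L). intros f Hf.
  replace (f i - f l) with ((f i - f j) + (f j - f l)) by ring.
  eapply Rle_trans; [apply Rabs_triang|].
  pose proof (HE f Hf i j Hi Hj Ha). pose proof (HL f Hf). lra.
Qed.

Section Energy.

Variables (N m : nat) (h : nat -> nat -> R) (a : nat -> nat -> R).

Definition resid (z : nat -> R) (x : nat -> nat -> R) i := dotp m (h i) (x i) - z i.

Definition diff_dotp (x v : nat -> nat -> R) i j :=
  dotp m (fun k => x j k - x i k) (fun k => v j k - v i k).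

Definition energy z K x :=
  / 2 * sumR N (fun i => resid z x i ^ 2)
  + K / 4 * sumR N (fun i => sumR N (fun j => a i j * diff_dotp x x i j)).

Definition energy_lin z K x v :=
  sumR N (fun i => resid z x i * dotp m (h i) (v i))
  + K / 2 * sumR N (fun i => sumR N (fun j => a i j * diff_dotp x v i j)).

Definition energy_quad K v :=
  / 2 * sumR N (fun i => dotp m (h i) (v i) ^ 2)
  + K / 4 * sumR N (fun i => sumR N (fun j => a i j * diff_dotp v v i j)).

Definition grad z K x i k :=
  resid z x i * h i k + K * sumR N (fun j => a i j * (x i k - x j k)).

(* The matrix of the linear part x |-> grad 0 K x, indexed by pairs (i, k), (j, l). *)
Definition grad_matrix K i k j l :=
  (if Nat.eqb j i then h i k * h i l else 0) +
  (if Nat.eqb l k then K * ((if Nat.eqb j i then sumR N (a i) else 0) - a i j)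
   else 0).

Lemma diff_dotp_ge0 v i j : 0 <= diff_dotp v v i j.
Proof. apply dotp_ge0. Qed.

Lemma diff_dotp_line x v t i j :
  diff_dotp (fun i k => x i k + t * v i k) (fun i k => x i k + t * v i k) i j =
  diff_dotp x x i j + t * (2 * diff_dotp x v i j) + t ^ 2 * diff_dotp v v i j.
Proof.
unfold diff_dotp, dotp. rewrite <- sumR_scal.
apply sumR_quadratic. intros; ring.
Qed.

Lemma energy_line z K x v t :
  energy z K (fun i k => x i k + t * v i k) =
  energy z K x + t * energy_lin z K x v + t ^ 2 * energy_quad K v.
Proof.
unfold energy, energy_lin, energy_quad.
rewrite (sumR_quadratic N t _ (fun i => resid z x i ^ 2)
  (fun i => 2 * (resid z x i * dotp m (h i) (v i))) (fun i => dotp m (h i) (v i) ^ 2)).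
2:{ intros i _. unfold resid. rewrite dotp_linear_r. ring. }
rewrite (sumR_quadratic N t
  (fun i => sumR N (fun j => a i j * diff_dotp (fun i k => x i k + t * v i k)
                                              (fun i k => x i k + t * v i k) i j))
  (fun i => sumR N (fun j => a i j * diff_dotp x x i j))
  (fun i => 2 * sumR N (fun j => a i j * diff_dotp x v i j))
  (fun i => sumR N (fun j => a i j * diff_dotp v v i j))).
2:{ intros i _. rewrite <- sumR_scal. apply sumR_quadratic.
    intros j _. rewrite diff_dotp_line. ring. }
rewrite !sumR_scal. field.
Qed.

Lemma energy_critical_shift z K x y : energy_lin z K x (fun i k => y i k - x i k) = 0 ->
  energy z K y = energy z K x + energy_quad K (fun i k => y i k - x i k).
Proof.
intros H.
replace y with (fun i k => x i k + 1 * (y i k - x i k)) at 1.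
- rewrite energy_line, H. ring.
- apply functional_extensionality; intro i; apply functional_extensionality; intro k. ring.
Qed.

Lemma energy_origin z K : energy z K (fun _ _ => 0) = / 2 * sumR N (fun i => z i ^ 2).
Proof.
unfold energy, resid, diff_dotp, dotp.
rewrite (sumR_ext N _ (fun i => z i ^ 2)).
- rewrite (sumR_eq0 N (fun i => sumR N _)); [ring|].
  intros i _. apply sumR_eq0. intros j _. rewrite sumR_eq0; [ring|]. intros; ring.
- intros i _. rewrite sumR_eq0; [ring|]. intros; ring.
Qed.

Lemma energy_lin_diag K w : energy_lin (fun _ => 0) K w w = 2 * energy_quad K w.
Proof.
unfold energy_lin, energy_quad, resid.
rewrite (sumR_ext N _ (fun i => dotp m (h i) (w i) ^ 2)) by (intros; ring).
field.
Qed.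

Lemma grad_matrix_apply K x i k : (i < N)%nat -> (k < m)%nat ->
  sumR N (fun j => sumR m (fun l => grad_matrix K i k j l * x j l)) = grad (fun _ => 0) K x i k.
Proof.
intros Hi Hk. unfold grad_matrix, grad, resid.
rewrite (sumR_ext N _ (fun j =>
    (if Nat.eqb j i then sumR m (fun l => h i k * h i l * x j l) else 0)
    + (if Nat.eqb j i then K * sumR N (a i) * x j k else 0) - K * a i j * x j k)).
2:{ intros j Hj.
    rewrite (sumR_ext m _ (fun l => (if Nat.eqb j i then h i k * h i l * x j l else 0) +
      (if Nat.eqb l k then K * ((if Nat.eqb j i then sumR N (a i) else 0) - a i j)
         * x j l else 0)))
      by (intros l _; destruct (Nat.eqb j i), (Nat.eqb l k); ring).
    rewrite sumR_add, sumR_delta by exact Hk.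
    destruct (Nat.eqb j i); [ring | rewrite sumR_const0; ring]. }
rewrite sumR_sub, sumR_add, !sumR_delta by exact Hi.
rewrite (sumR_ext N (fun j => a i j * (x i k - x j k))
           (fun j => a i j * x i k - a i j * x j k)) by (intros; ring).
rewrite (sumR_ext N (fun j => K * a i j * x j k) (fun j => K * (a i j * x j k))) by (intros; ring).
rewrite (sumR_ext m (fun l => h i k * h i l * x i l) (fun l => h i k * (h i l * x i l)))
  by (intros; ring).
rewrite sumR_sub, sumR_scal_r, !sumR_scal. unfold dotp. ring.
Qed.

Hypothesis Hunit : forall i, (i < N)%nat -> vnorm m (h i) = 1.
Hypothesis Hsym : forall i j, a i j = a j i.
Hypothesis Hnonneg : forall i j, 0 <= a i j.
Hypothesis Hrank : rank_full_col N m h.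
Hypothesis Hconn : connected N a.

(* Symmetry of a turns the sum over unordered edges into half the sum over ordered pairs. *)
Lemma DK_energy z K x : DK N m h z a K x = energy z K x.
Proof.
unfold DK, energy. f_equal.
- f_equal. apply sumR_ext. intros i Hi.
  rewrite dist_hyp_unit by auto. unfold resid. apply pow2_abs.
- rewrite (sumR_ext N _ (fun i => sumR N (fun j =>
              if (i <? j)%nat then a i j * diff_dotp x x i j else 0))).
  + rewrite sumR_upper_half; [field|..].
    * intros i j. unfold diff_dotp, dotp. rewrite Hsym. f_equal.
      apply sumR_ext. intros; ring.
    * intros i. unfold diff_dotp, dotp. rewrite sumR_eq0; [ring|]. intros; ring.
  + intros i _. apply sumR_ext. intros j _. destruct (i <? j)%nat; auto.
    unfold diff_dotp. rewrite vnorm_sq. reflexivity.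
Qed.

Lemma grad_zero_iff z K x : grad_zero N m h z a K x <-> forall v, energy_lin z K x v = 0.
Proof.
assert (Hd : forall v, derivable_pt_lim
           (fun t => DK N m h z a K (fun i k => x i k + t * v i k)) 0 (energy_lin z K x v)).
{ intros v.
  replace (fun t => DK N m h z a K (fun i k => x i k + t * v i k)) with
    (fun t => energy z K x + t * energy_lin z K x v + t ^ 2 * energy_quad K v).
  - apply derivable_pt_lim_quadratic.
  - apply functional_extensionality. intros t. rewrite DK_energy, energy_line. reflexivity. }
split.
- intros Hg v. exact (uniqueness_limite _ 0 _ _ (Hd v) (Hg v)).
- intros H0 v. pose proof (Hd v) as Hv. rewrite (H0 v) in Hv. exact Hv.
Qed.

Lemma energy_lin_grad z K x v :
  energy_lin z K x v = sumR N (fun i => sumR m (fun k => v i k * grad z K x i k)).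
Proof.
set (W := sumR N (fun i => sumR N (fun j =>
             a i j * sumR m (fun k => (x i k - x j k) * v i k)))).
assert (E1 : sumR N (fun i => sumR N (fun j => a i j * diff_dotp x v i j)) = 2 * W).
{ unfold diff_dotp, dotp.
  rewrite (sumR_ext N _ (fun i =>
      sumR N (fun j => a i j * sumR m (fun k => (x j k - x i k) * v j k))
      + sumR N (fun j => a i j * sumR m (fun k => (x i k - x j k) * v i k)))).
  2:{ intros i _. rewrite <- sumR_add. apply sumR_ext. intros j _.
      rewrite <- Rmult_plus_distr_l, <- sumR_add. f_equal. apply sumR_ext. intros; ring. }
  rewrite sumR_add, sumR_swap. fold W.
  rewrite (sumR_ext N _ (fun i => sumR N (fun j =>
             a i j * sumR m (fun k => (x i k - x j k) * v i k)))).
  - fold W. ring.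
  - intros i _. apply sumR_ext. intros j _. rewrite Hsym. reflexivity. }
unfold energy_lin. rewrite E1.
rewrite (sumR_ext N (fun i => sumR m (fun k => v i k * grad z K x i k))
   (fun i => resid z x i * dotp m (h i) (v i)
   + K * sumR N (fun j => a i j * sumR m (fun k => (x i k - x j k) * v i k)))).
- rewrite sumR_add, sumR_scal. fold W. field.
- intros i _. unfold grad, dotp.
  rewrite (sumR_ext m _ (fun k => resid z x i * (h i k * v i k)
      + K * sumR N (fun j => a i j * ((x i k - x j k) * v i k)))).
  + rewrite sumR_add, !sumR_scal, (sumR_swap m N). f_equal. f_equal.
    apply sumR_ext. intros j _. apply sumR_scal.
  + intros k _.
    rewrite (sumR_ext N (fun j => a i j * ((x i k - x j k) * v i k))
               (fun j => a i j * (x i k - x j k) * v i k)) by (intros; ring).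
    rewrite sumR_scal_r. ring.
Qed.

Lemma edge_sum_ge0 v : 0 <= sumR N (fun i => sumR N (fun j => a i j * diff_dotp v v i j)).
Proof.
apply sumR_ge0. intros. apply sumR_ge0. intros.
apply Rmult_le_pos; [apply Hnonneg | apply diff_dotp_ge0].
Qed.

Lemma energy_quad_ge0 K v : 0 <= K -> 0 <= energy_quad K v.
Proof.
intros HK. unfold energy_quad.
pose proof (sumR_ge0 N (fun i => dotp m (h i) (v i) ^ 2) ltac:(intros; apply pow2_ge_0)).
pose proof (edge_sum_ge0 v). nra.
Qed.

(* Positive definiteness: a zero of Q is constant along edges, hence constant, hence 0 by rank. *)
Lemma energy_quad_eq0 K w : 0 < K -> energy_quad K w = 0 ->
  forall i k, (i < N)%nat -> (k < m)%nat -> w i k = 0.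
Proof.
intros HK Hq.
pose proof (sumR_ge0 N (fun i => dotp m (h i) (w i) ^ 2) ltac:(intros; apply pow2_ge_0)) as H1.
pose proof (edge_sum_ge0 w) as H2. unfold energy_quad in Hq.
assert (Hproj : forall i, (i < N)%nat -> dotp m (h i) (w i) = 0).
{ intros i Hi.
  pose proof (sumR_eq0_ge0 N (fun i => dotp m (h i) (w i) ^ 2)
                ltac:(intros; apply pow2_ge_0) ltac:(nra) i Hi) as Hi0.
  cbv beta in Hi0. nra. }
assert (Hedge : forall i j k, (i < N)%nat -> (j < N)%nat -> a i j > 0 -> (k < m)%nat ->
          w i k = w j k).
{ intros i j k Hi Hj Ha Hk.
  assert (Hrow : sumR N (fun j => a i j * diff_dotp w w i j) = 0).
  { apply (sumR_eq0_ge0 N (fun i => sumR N (fun j => a i j * diff_dotp w w i j))); auto; [|nra].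
    intros. apply sumR_ge0. intros. apply Rmult_le_pos; [apply Hnonneg | apply diff_dotp_ge0]. }
  assert (Hd : diff_dotp w w i j = 0).
  { apply (Rmult_eq_reg_l (a i j)); [|lra]. rewrite Rmult_0_r.
    apply (sumR_eq0_ge0 N (fun j => a i j * diff_dotp w w i j)); auto.
    intros. apply Rmult_le_pos; [apply Hnonneg | apply diff_dotp_ge0]. }
  unfold diff_dotp, dotp in Hd.
  pose proof (sumR_eq0_ge0 m _ ltac:(intros; apply Rle_0_sqr) Hd k Hk) as Hk0.
  apply Rsqr_0_uniq in Hk0. lra. }
assert (Hconst : forall i k, (i < N)%nat -> (k < m)%nat -> w i k = w 0%nat k).
{ intros i k Hi Hk. apply (reach_eq N a (fun i => w i k)); [|apply Hconn; lia | exact Hi].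
  intros; apply Hedge; auto. }
intros i k Hi Hk. rewrite (Hconst i k Hi Hk). apply Hrank; auto.
intros j Hj. rewrite <- (Hproj j Hj). apply sumR_ext. intros l Hl. rewrite (Hconst j l Hj Hl). reflexivity.
Qed.

Lemma critical_energy_le z K x y : 0 <= K -> grad_zero N m h z a K x ->
  energy z K x <= energy z K y.
Proof.
intros HK Hx. rewrite (energy_critical_shift z K x y (proj1 (grad_zero_iff z K x) Hx _)).
pose proof (energy_quad_ge0 K (fun i k => y i k - x i k) HK). lra.
Qed.

Lemma critical_unique z K : 0 < K -> forall x y,
  grad_zero N m h z a K x -> grad_zero N m h z a K y ->
  forall i k, (i < N)%nat -> (k < m)%nat -> x i k = y i k.
Proof.
intros HK x y Hx Hy i k Hi Hk.
pose proof (energy_critical_shift z K x y (proj1 (grad_zero_iff z K x) Hx _)).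
pose proof (energy_critical_shift z K y x (proj1 (grad_zero_iff z K y) Hy _)).
pose proof (energy_quad_ge0 K (fun i k => y i k - x i k) ltac:(lra)).
pose proof (energy_quad_ge0 K (fun i k => x i k - y i k) ltac:(lra)).
pose proof (energy_quad_eq0 K (fun i k => y i k - x i k) HK ltac:(lra) i k Hi Hk).
cbv beta in *. lra.
Qed.

Lemma grad_shift z K x i k : grad z K x i k = grad (fun _ => 0) K x i k - z i * h i k.
Proof. unfold grad, resid. ring. Qed.

(* A critical point solves the linear system grad_matrix x = (z_i h_i), which is
   injective because its quadratic form is 2 Q. *)
Lemma critical_exists z K : 0 < K -> exists x, grad_zero N m h z a K x.
Proof.
intros HK.
destruct (injective_surjective2 N m (grad_matrix K)) with (b := fun i k => z i * h i k)
  as [x Hx].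
- intros w Hw. apply (energy_quad_eq0 K w HK).
  apply (Rmult_eq_reg_l 2); [|lra]. rewrite Rmult_0_r, <- energy_lin_diag, energy_lin_grad.
  apply sumR_eq0. intros i Hi. apply sumR_eq0. intros k Hk.
  rewrite <- grad_matrix_apply, Hw by auto. ring.
- exists x. apply grad_zero_iff. intros v. rewrite energy_lin_grad.
  apply sumR_eq0. intros i Hi. apply sumR_eq0. intros k Hk.
  rewrite grad_shift, <- grad_matrix_apply, Hx by auto. ring.
Qed.

Lemma critical_resid_sq_le z K x i : 0 <= K -> grad_zero N m h z a K x -> (i < N)%nat ->
  resid z x i ^ 2 <= sumR N (fun i => z i ^ 2).
Proof.
intros HK Hx Hi.
pose proof (critical_energy_le z K x (fun _ _ => 0) HK Hx) as Hle.
rewrite energy_origin in Hle. unfold energy in Hle.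
pose proof (edge_sum_ge0 x).
pose proof (sumR_term_le N (fun i => resid z x i ^ 2) i ltac:(intros; apply pow2_ge_0) Hi).
cbv beta in *. nra.
Qed.

Lemma critical_edge_bound z kappa0 K x i j k : 0 < kappa0 < K -> grad_zero N m h z a K x ->
  (i < N)%nat -> (j < N)%nat -> a i j > 0 -> (k < m)%nat ->
  Rabs (x i k - x j k) <= sqrt (2 * sumR N (fun i => z i ^ 2) / (kappa0 * a i j)).
Proof.
intros HK Hx Hi Hj Ha Hk. set (Z := sumR N (fun i => z i ^ 2)).
pose proof (critical_energy_le z K x (fun _ _ => 0) ltac:(lra) Hx) as Hle.
rewrite energy_origin in Hle. unfold energy in Hle. fold Z in Hle.
assert (Hedges : K * sumR N (fun i => sumR N (fun j => a i j * diff_dotp x x i j)) <= 2 * Z).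
{ pose proof (sumR_ge0 N (fun i => resid z x i ^ 2) ltac:(intros; apply pow2_ge_0)). lra. }
assert (Hij : a i j * (x i k - x j k) ^ 2 <=
              sumR N (fun i => sumR N (fun j => a i j * diff_dotp x x i j))).
{ eapply Rle_trans; [|apply (sumR_term_le N _ i); auto].
  2:{ intros. apply sumR_ge0. intros. apply Rmult_le_pos; [apply Hnonneg | apply diff_dotp_ge0]. }
  eapply Rle_trans; [|apply (sumR_term_le N (fun j => a i j * diff_dotp x x i j) j); auto].
  2:{ intros. apply Rmult_le_pos; [apply Hnonneg | apply diff_dotp_ge0]. }
  apply Rmult_le_compat_l; [apply Hnonneg|].
  replace ((x i k - x j k) ^ 2) with ((x j k - x i k) * (x j k - x i k)) by ring.
  apply (sumR_term_le m (fun k => (x j k - x i k) * (x j k - x i k))); auto.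
  intros; apply Rle_0_sqr. }
apply Rabs_le_sqrt.
assert (HZ : 0 <= Z) by (apply sumR_ge0; intros; apply pow2_ge_0).
apply (Rmult_le_reg_l (kappa0 * a i j)); [nra|].
replace (kappa0 * a i j * (2 * Z / (kappa0 * a i j))) with (2 * Z) by (field; lra).
assert (Has : 0 <= a i j * (x i k - x j k) ^ 2)
  by (apply Rmult_le_pos; [apply Hnonneg | apply pow2_ge_0]).
apply Rle_trans with (K * (a i j * (x i k - x j k) ^ 2)); [nra|].
apply Rle_trans with (K * sumR N (fun i => sumR N (fun j => a i j * diff_dotp x x i j)));
  [apply Rmult_le_compat_l; lra | exact Hedges].
Qed.

Lemma critical_spread_bound z kappa0 : 0 < kappa0 ->
  exists L, forall K x i k, kappa0 < K -> grad_zero N m h z a K x ->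
    (i < N)%nat -> (k < m)%nat -> Rabs (x i k - x 0%nat k) <= L.
Proof.
intros Hk0.
set (P := fun f : nat -> R => exists K x k, kappa0 < K /\ grad_zero N m h z a K x /\
                                  (k < m)%nat /\ f = (fun i => x i k)).
destruct (common_bound N (fun i L => forall f, P f -> Rabs (f i - f 0%nat) <= L)) as [L HL].
- intros i L L' H HL f Hf. eapply Rle_trans; [apply H, Hf | exact HL].
- intros i Hi. apply (reach_bound N a P (fun i j =>
    sqrt (2 * sumR N (fun i => z i ^ 2) / (kappa0 * a i j)))); auto.
  + intros f [K [x [k [HK [Hx [Hk ->]]]]]] i' j' Hi' Hj' Ha.
    apply (critical_edge_bound z kappa0 K); auto.
  + apply Hconn; lia.
- exists L. intros K x i k HK Hx Hi Hk.
  apply (HL i Hi (fun i => x i k)). exists K, x, k. auto.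
Qed.

(* h_i^T x_0 = (resid_i + z_i) - h_i^T (x_i - x_0) is bounded, and H has full column rank. *)
Lemma critical_bounded z kappa0 : 0 < kappa0 ->
  exists B, forall K x, kappa0 < K -> grad_zero N m h z a K x ->
    forall i k, (i < N)%nat -> (k < m)%nat -> Rabs (x i k) <= B.
Proof.
intros Hk0. destruct (critical_spread_bound z kappa0 Hk0) as [L HL].
set (Z := sumR N (fun i => z i ^ 2)).
set (S := sumR N (fun i => sumR m (fun k => Rabs (h i k)))).
assert (HS : 0 <= S) by (apply sumR_ge0; intros; apply sumR_ge0; intros; apply Rabs_pos).
destruct (rank_full_col_bound N m h Hrank (2 * sqrt Z + Rabs L * S))
  as [c Hc]; [pose proof (sqrt_pos Z); pose proof (Rabs_pos L); nra|].
exists (c + Rabs L). intros K x HK Hx i k Hi Hk.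
assert (Hspread : forall i k, (i < N)%nat -> (k < m)%nat -> Rabs (x i k - x 0%nat k) <= Rabs L).
{ intros. eapply Rle_trans; [apply (HL K); auto | apply Rle_abs]. }
assert (Hx0 : Rabs (x 0%nat k) <= c).
{ apply Hc; auto. intros j Hj.
  replace (dotp m (h j) (x 0%nat))
    with (resid z x j + z j - dotp m (h j) (fun k => x j k - x 0%nat k))
    by (unfold resid; rewrite dotp_sub_r; ring).
  assert (Hres : Rabs (resid z x j) <= sqrt Z)
    by (apply Rabs_le_sqrt, (critical_resid_sq_le z K); auto; lra).
  assert (Hz : Rabs (z j) <= sqrt Z).
  { apply Rabs_le_sqrt, (sumR_term_le N (fun i => z i ^ 2)); auto. intros; apply pow2_ge_0. }
  assert (Hdiff : Rabs (dotp m (h j) (fun k => x j k - x 0%nat k)) <= Rabs L * S).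
  { eapply Rle_trans; [apply Rabs_dotp_le; intros; apply Hspread; auto|].
    apply Rmult_le_compat_l; [apply Rabs_pos|].
    apply (sumR_term_le N (fun i => sumR m (fun k => Rabs (h i k)))); auto.
    intros; apply sumR_ge0; intros; apply Rabs_pos. }
  pose proof (Rabs_triang (resid z x j + z j) (- dotp m (h j) (fun k => x j k - x 0%nat k))).
  pose proof (Rabs_triang (resid z x j) (z j)).
  rewrite Rabs_Ropp in *. unfold Rminus at 1. lra. }
replace (x i k) with (x 0%nat k + (x i k - x 0%nat k)) by ring.
eapply Rle_trans; [apply Rabs_triang|]. pose proof (Hspread i k Hi Hk). lra.
Qed.

End Energy.

Theorem mainTheorem12
  (N m : nat) (h : nat -> nat -> R) (z : nat -> R) (a : nat -> nat -> R)
  (Hunit : forall i, (i < N)%nat -> vnorm m (h i) = 1)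
  (Hrank : rank_full_col N m h)
  (Hsym : forall i j, a i j = a j i)
  (Hnonneg : forall i j, 0 <= a i j)
  (Hconn : connected N a) :
  (forall K, 0 < K ->
     (exists x, grad_zero N m h z a K x) /\
     (forall x y, grad_zero N m h z a K x -> grad_zero N m h z a K y ->
        forall i k, (i < N)%nat -> (k < m)%nat -> x i k = y i k))
  /\
  (forall kappa0, 0 < kappa0 ->
     exists B, forall K x, kappa0 < K -> grad_zero N m h z a K x ->
       forall i k, (i < N)%nat -> (k < m)%nat -> Rabs (x i k) <= B).
Proof.
split.
- intros K HK. split.
  + exact (critical_exists N m h a Hunit Hsym Hnonneg Hrank Hconn z K HK).
  + exact (critical_unique N m h a Hunit Hsym Hnonneg Hrank Hconn z K HK).
- exact (critical_bounded N m h a Hunit Hsym Hnonneg Hrank Hconn z).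
Qed.
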